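(* Consider two channels $I$ and $J$ with the same finite state set $\mathcal{H}$ and pmfs $p^I_{\mathcal{H}}$, $p^J_{\mathcal{H}}$, and let $h^I\sim p^I_{\mathcal{H}}$, $h^J\sim p^J_{\mathcal{H}}$. Assume $C_u$ is non-increasing in $h$. If $h^I$ first-order stochastically dominates $h^J$, i.e. $\mathbb{E}[f(h^I)]\ge\mathbb{E}[f(h^J)]$ for every non-decreasing $f:\mathcal{H}\to\mathbb{R}$, then $\bar A_r^{I*}\le\bar A_r^{J*}$, where $\bar A_r^{I*}$ and $\bar A_r^{J*}$ denote the optimal values of the constrained problem (with the same $C_s$, $C_u$, $\hat A_l$, $\hat A_r$ and $C^{\max}$) under channels $I$ and $J$ respectively.
   Context: Single IoT device model. Fix integers $\hat A_l,\hat A_r\ge1$; AoI states $\mathbf{A}=(A_l,A_r)\in\{1,\dots,\hat A_l\}\times\{1,\dots,\hat A_r\}$. Channel states lie in a finite set $\mathcal{H}\subset(0,\infty)$ and are i.i.d. across time slots with a given pmf. Actions $\mathbf{w}=(s,u)\in\{0,1\}^2$ with energy cost $C(\mathbf{w},h)=sC_s+uC_u(h)$, $C_s\ge0$, $C_u:\mathcal{H}\to[0,\infty)$. AoI dynamics under $\mathbf{w}=(s,u)$: $A_l(t+1)=1$ if $s=1$, else $\min\{A_l(t)+1,\hat A_l\}$; $A_r(t+1)=\min\{A_l(t)+1,\hat A_r\}$ if $u=1$, else $\min\{A_r(t)+1,\hat A_r\}$. A stationary policy $\pi$ selects (possibly randomly) an action as a function of the current $(\mathbf{A}(t),h(t))$;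 for stationary unichain $\pi$, $\bar A_r(\pi)=\limsup_{T\to\infty}\frac1T\sum_{t=1}^T\mathbb{E}[A_r(t)]$ and $\bar C(\pi)=\limsup_{T\to\infty}\frac1T\sum_{t=1}^T\mathbb{E}[C(\mathbf{w}(t),h(t))]$. Given $C^{\max}>0$ (assumed such that the problem is feasible), the constrained problem is $\bar A_r^*=\min_\pi\{\bar A_r(\pi):\bar C(\pi)\le C^{\max}\}$ over stationary unichain policies. *)

From Stdlib Require Import Reals Lra Lia List Arith.
Import ListNotations.
Open Scope R_scope.

Definition sumL {A : Type} (l : list A) (f : A -> R) : R :=
  fold_right (fun x acc => f x + acc) 0 l.

(* state of the controlled chain: (A_l, A_r, h) *)
Definition st : Type := (nat * nat * R)%type.

(* actions w = (s, u) *)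
Definition actions : list (bool * bool) :=
  [(false, false); (false, true); (true, false); (true, true)].

(* stationary randomized policy: probability of action w in state (A_l,A_r,h) *)
Definition Policy : Type := nat -> nat -> R -> bool * bool -> R.

Definition states (Alh Arh : nat) (hs : list R) : list st :=
  flat_map (fun al => flat_map (fun ar => map (fun h => (al, ar, h)) hs)
                                (seq 1 Arh)) (seq 1 Alh).

Definition next (Alh Arh : nat) (al ar : nat) (w : bool * bool) : nat * nat :=
  ((if fst w then 1%nat else Nat.min (al + 1) Alh),
   (if snd w then Nat.min (al + 1) Arh else Nat.min (ar + 1) Arh)).

Definition cost (Cs : R) (Cu : R -> R) (w : bool * bool) (h : R) : R :=
  (if fst w then Cs else 0) + (if snd w then Cu h else 0).

Definition valid_policy (Alh Arh : nat) (hs : list R) (pi : Policy) : Prop :=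
  forall al ar h, (1 <= al <= Alh)%nat -> (1 <= ar <= Arh)%nat -> In h hs ->
    (forall w, 0 <= pi al ar h w) /\ sumL actions (pi al ar h) = 1.

Definition trans (Alh Arh : nat) (p : R -> R) (pi : Policy) (s s' : st) : R :=
  let '(al, ar, h) := s in
  let '(al', ar', h') := s' in
  p h' * sumL actions (fun w =>
    let a := next Alh Arh al ar w in
    if andb (Nat.eqb (fst a) al') (Nat.eqb (snd a) ar') then pi al ar h w else 0).

(* distribution of the state at time slot n+1, starting from AoI (a0l,a0r), h(1) ~ p *)
Fixpoint dist (Alh Arh : nat) (hs : list R) (p : R -> R) (pi : Policy)
    (a0l a0r : nat) (n : nat) (s : st) : R :=
  match n with
  | O => let '(al, ar, h) := s in
         if andb (Nat.eqb al a0l) (Nat.eqb ar a0r) then p h else 0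
  | S m => sumL (states Alh Arh hs)
             (fun s0 => dist Alh Arh hs p pi a0l a0r m s0 * trans Alh Arh p pi s0 s)
  end.

(* E[A_r(n+1)] *)
Definition EAr Alh Arh hs p pi a0l a0r (n : nat) : R :=
  sumL (states Alh Arh hs) (fun s =>
    let '(al, ar, h) := s in dist Alh Arh hs p pi a0l a0r n s * INR ar).

(* E[C(w(n+1), h(n+1))] *)
Definition ECost Alh Arh hs p pi a0l a0r Cs Cu (n : nat) : R :=
  sumL (states Alh Arh hs) (fun s =>
    let '(al, ar, h) := s in
    dist Alh Arh hs p pi a0l a0r n s *
      sumL actions (fun w => pi al ar h w * cost Cs Cu w h)).

Definition cesaro (u : nat -> R) (T : nat) : R := sumL (seq 0 T) u / INR T.

Definition is_limsup (u : nat -> R) (l : R) : Prop :=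
  forall eps, eps > 0 ->
    (exists N, forall n, (n >= N)%nat -> u n <= l + eps) /\
    (forall N, exists n, (n >= N)%nat /\ l - eps <= u n).

Inductive reach (Alh Arh : nat) (hs : list R) (p : R -> R) (pi : Policy) : st -> st -> Prop :=
| reach_refl : forall s, reach Alh Arh hs p pi s s
| reach_step : forall s s' s'', In s' (states Alh Arh hs) ->
    trans Alh Arh p pi s s' > 0 -> reach Alh Arh hs p pi s' s'' ->
    reach Alh Arh hs p pi s s''.

Definition recurrent Alh Arh hs p pi (s : st) : Prop :=
  forall s', reach Alh Arh hs p pi s s' -> reach Alh Arh hs p pi s' s.

Definition unichain Alh Arh hs p pi : Prop :=
  forall s1 s2, In s1 (states Alh Arh hs) -> In s2 (states Alh Arh hs) ->
    recurrent Alh Arh hs p pi s1 -> recurrent Alh Arh hs p pi s2 ->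
    reach Alh Arh hs p pi s1 s2.

Definition feasible_values Alh Arh hs p Cs Cu Cmax a0l a0r (a : R) : Prop :=
  exists pi : Policy,
    valid_policy Alh Arh hs pi /\ unichain Alh Arh hs p pi /\
    (exists c, is_limsup (cesaro (ECost Alh Arh hs p pi a0l a0r Cs Cu)) c /\ c <= Cmax) /\
    is_limsup (cesaro (EAr Alh Arh hs p pi a0l a0r)) a.

Definition is_glb (E : R -> Prop) (m : R) : Prop :=
  (forall x, E x -> m <= x) /\ (forall b, (forall x, E x -> b <= x) -> b <= m).

Definition is_pmf (hs : list R) (p : R -> R) : Prop :=
  (forall h, In h hs -> 0 <= p h) /\ sumL hs p = 1.

Definition expect (hs : list R) (p : R -> R) (f : R -> R) : R :=
  sumL hs (fun h => p h * f h).

From Pilot Require Import Defs.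
From Stdlib Require Import Reals List Permutation Lra Lia Arith Classical.
From Coquelicot Require Lim_seq.
Import ListNotations.
Open Scope R_scope.

(** Since [h^I] dominates [h^J], there is a Markov kernel [K] on the channel states
    that maps the law of [h^I] to that of [h^J] and only moves to smaller states.
    Given a feasible policy [piJ] for channel [J], let the device under channel [I]
    draw [h' ~ K h] and play [piJ] as if the channel were [h']. In every AoI state
    this policy takes each action with the same channel-averaged probability as
    [piJ], so the AoI process and its average are the same; its energy cost is no
    larger because [C_u] is non-increasing; and it is unichain because it can
    follow every path of the [J]-chain. Hence every value feasible under [J] is
    feasible under [I], and the infima compare. *)

Section Sums.
Context {A : Type}.
Implicit Types (l : list A) (f g : A -> R).

Lemma sumL_cons x l f : sumL (x :: l) f = f x + sumL l f.
Proof. reflexivity. Qed.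

Lemma sumL_app l1 l2 f : sumL (l1 ++ l2) f = sumL l1 f + sumL l2 f.
Proof. unfold sumL. induction l1 as [|x l1 IH]; cbn; [lra|]. rewrite IH; lra. Qed.

Lemma sumL_ext l f g : (forall x, In x l -> f x = g x) -> sumL l f = sumL l g.
Proof.
  induction l as [|x l IH]; intros E; cbn; [reflexivity|].
  unfold sumL in IH; rewrite E, IH; auto with datatypes.
Qed.

Lemma sumL_le l f g : (forall x, In x l -> f x <= g x) -> sumL l f <= sumL l g.
Proof.
  induction l as [|x l IH]; intros E; cbn; [lra|].
  unfold sumL in IH; apply Rplus_le_compat; auto with datatypes.
Qed.

Lemma sumL_plus l f g : sumL l (fun x => f x + g x) = sumL l f + sumL l g.
Proof. unfold sumL. induction l as [|x l IH]; cbn; [lra|]. rewrite IH; lra. Qed.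

Lemma sumL_scal_l l c f : sumL l (fun x => c * f x) = c * sumL l f.
Proof. unfold sumL. induction l as [|x l IH]; cbn; [lra|]. rewrite IH; lra. Qed.

Lemma sumL_scal_r l c f : sumL l (fun x => f x * c) = sumL l f * c.
Proof. unfold sumL. induction l as [|x l IH]; cbn; [lra|]. rewrite IH; lra. Qed.

Lemma sumL_0 l : sumL l (fun _ => 0) = 0.
Proof. unfold sumL. induction l as [|x l IH]; cbn; [lra|]. rewrite IH; lra. Qed.

Lemma sumL_eq0 l f : (forall x, In x l -> f x = 0) -> sumL l f = 0.
Proof. intros E. rewrite (sumL_ext l f (fun _ => 0)) by exact E. apply sumL_0. Qed.

Lemma sumL_nonneg l f : (forall x, In x l -> 0 <= f x) -> 0 <= sumL l f.
Proof. intros H. rewrite <- (sumL_0 l). now apply sumL_le. Qed.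

Lemma sumL_term_le l f x : (forall y, In y l -> 0 <= f y) -> In x l -> f x <= sumL l f.
Proof.
  induction l as [|y l IH]; intros H Hx; [destruct Hx|].
  change (f x <= f y + sumL l f).
  assert (0 <= f y) by auto with datatypes.
  assert (0 <= sumL l f) by (apply sumL_nonneg; auto with datatypes).
  destruct Hx as [<-|Hx]; [lra|].
  assert (f x <= sumL l f) by (apply IH; auto with datatypes). lra.
Qed.

Lemma sumL_pos_witness l f : 0 < sumL l f -> exists x, In x l /\ 0 < f x.
Proof.
  intros H. apply NNPP; intros C.
  assert (sumL l f <= 0); [|lra].
  rewrite <- (sumL_0 l). apply sumL_le. intros x Hx.
  apply Rnot_lt_le. intros Hf. apply C. eauto.
Qed.

Lemma sumL_perm l1 l2 f : Permutation l1 l2 -> sumL l1 f = sumL l2 f.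
Proof. induction 1; cbn in *; unfold sumL in *; lra. Qed.

End Sums.

Lemma sumL_flat_map {A B : Type} (g : A -> list B) (l : list A) (f : B -> R) :
  sumL (flat_map g l) f = sumL l (fun x => sumL (g x) f).
Proof.
  induction l as [|x l IH]; [reflexivity|].
  change (sumL (g x ++ flat_map g l) f = sumL (g x) f + sumL l (fun x => sumL (g x) f)).
  rewrite sumL_app, IH. reflexivity.
Qed.

Lemma sumL_map {A B : Type} (g : A -> B) (l : list A) (f : B -> R) :
  sumL (map g l) f = sumL l (fun x => f (g x)).
Proof. unfold sumL. induction l as [|x l IH]; cbn; [reflexivity|]. rewrite IH. reflexivity. Qed.

Lemma sumL_swap {A B : Type} (l : list A) (l' : list B) (F : A -> B -> R) :
  sumL l (fun x => sumL l' (F x)) = sumL l' (fun y => sumL l (fun x => F x y)).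
Proof.
  induction l as [|x l IH].
  - symmetry. apply sumL_0.
  - change (sumL l' (F x) + sumL l (fun x => sumL l' (F x)) =
            sumL l' (fun y => F x y + sumL l (fun x => F x y))).
    rewrite sumL_plus, IH. reflexivity.
Qed.

Lemma sumL_indicator (l : list R) x g : NoDup l -> In x l ->
  sumL l (fun h => if Req_EM_T h x then g h else 0) = g x.
Proof.
  induction l as [|y l IH]; intros Hnd Hx; [destruct Hx|].
  apply NoDup_cons_iff in Hnd as [Hy Hnd].
  change ((if Req_EM_T y x then g y else 0) +
          sumL l (fun h => if Req_EM_T h x then g h else 0) = g x).
  destruct (Req_EM_T y x) as [<-|Hyx].
  - rewrite sumL_eq0; [lra|]. intros h Hh. destruct (Req_EM_T h y); [congruence|auto].
  - destruct Hx as [->|Hx]; [congruence|]. rewrite IH; auto; lra.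
Qed.

Lemma Rmult_pos_factors x y : 0 <= x -> 0 <= y -> 0 < x * y -> 0 < x /\ 0 < y.
Proof.
  intros Hx Hy Hxy. split; apply Rnot_le_lt; intros Hle.
  - replace x with 0 in Hxy by lra. lra.
  - replace y with 0 in Hxy by lra. lra.
Qed.

Lemma max_exists (l : list R) : l <> [] -> exists m, In m l /\ forall x, In x l -> x <= m.
Proof.
  induction l as [|y l IH]; intros H; [congruence|].
  destruct l as [|z l].
  - exists y. split; [now left|]. intros x [->|[]]; lra.
  - destruct IH as [m [Hm Hx]]; [discriminate|].
    destruct (Rle_dec y m).
    + exists m. split; [now right|]. intros x [<-|Hx']; auto.
    + exists y. split; [now left|]. intros x [<-|Hx']; [lra|]. specialize (Hx x Hx'); lra.
Qed.

(** * Monotone coupling of stochastically ordered laws *)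

Definition tail_mass (L : list R) (f : R -> R) (t : R) : R :=
  sumL L (fun h => if Rle_dec t h then f h else 0).

Record dominated (L : list R) (b a : R -> R) : Prop := {
  dominated_lower_nonneg : forall h, In h L -> 0 <= b h;
  dominated_upper_nonneg : forall h, In h L -> 0 <= a h;
  dominated_mass : sumL L a = sumL L b;
  dominated_tail : forall t, tail_mass L b t <= tail_mass L a t }.

Record downward_kernel (L : list R) (a b : R -> R) (K : R -> R -> R) : Prop := {
  kernel_nonneg : forall h h', In h L -> In h' L -> 0 <= K h h';
  kernel_row : forall h, In h L -> sumL L (K h) = 1;
  kernel_push : forall h', In h' L -> sumL L (fun h => a h * K h h') = b h';
  kernel_down : forall h h', In h L -> In h' L -> 0 < a h -> 0 < K h h' -> h' <= h }.

Lemma dominated_perm L1 L2 b a :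
  Permutation L1 L2 -> dominated L1 b a -> dominated L2 b a.
Proof.
  intros P [Hb Ha Hmass Htail].
  assert (Hin : forall x, In x L2 -> In x L1)
    by (intros x; apply Permutation_in, Permutation_sym, P).
  split; auto.
  - rewrite <- !(sumL_perm _ _ _ P). exact Hmass.
  - intros t. unfold tail_mass. rewrite <- !(sumL_perm _ _ _ P). apply Htail.
Qed.

Lemma downward_kernel_perm L1 L2 a b K :
  Permutation L1 L2 -> downward_kernel L1 a b K -> downward_kernel L2 a b K.
Proof.
  intros P [H0 Hrow Hpush Hdown].
  assert (Hin : forall x, In x L2 -> In x L1)
    by (intros x; apply Permutation_in, Permutation_sym, P).
  split; auto.
  - intros h Hh. rewrite <- (sumL_perm _ _ _ P). auto.
  - intros h' Hh'. rewrite <- (sumL_perm _ _ _ P). auto.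
Qed.

Lemma tail_mass_above L f t : (forall x, In x L -> x < t) -> tail_mass L f t = 0.
Proof.
  intros H. apply sumL_eq0. intros x Hx. specialize (H x Hx).
  destruct (Rle_dec t x); [lra|reflexivity].
Qed.

Lemma tail_mass_cons m L f t :
  tail_mass (m :: L) f t = (if Rle_dec t m then f m else 0) + tail_mass L f t.
Proof. reflexivity. Qed.

Lemma tail_mass_nonneg L f t : (forall x, In x L -> 0 <= f x) -> 0 <= tail_mass L f t.
Proof. intros H. apply sumL_nonneg. intros x Hx. destruct (Rle_dec t x); auto; lra. Qed.

Lemma downward_kernel_singleton m a b :
  dominated [m] b a -> downward_kernel [m] a b (fun _ _ => 1).
Proof.
  intros [_ _ Hmass _]. cbn in Hmass.
  split; cbn.
  - intros; lra.
  - intros; lra.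
  - intros h' [<-|[]]. lra.
  - intros h h' [<-|[]] [<-|[]]. lra.
Qed.

(** The top atom [m] keeps the mass [b m] and sends its excess [a m - b m]
    to the next atom [m2], where a kernel for the remaining atoms takes over. *)
Section Extension.
Variables (m m2 : R) (L : list R) (a b : R -> R) (K' : R -> R -> R).
Hypothesis HndL : NoDup L.
Hypothesis Hm_top : forall x, In x L -> x < m.
Hypothesis Hm2_in : In m2 L.
Hypothesis Hm2_top : forall x, In x L -> x <= m2.
Hypothesis Hdom : dominated (m :: L) b a.

Let e := a m - b m.
Let a' h := a h + (if Req_EM_T h m2 then e else 0).

Lemma excess_nonneg : 0 <= e.
Proof.
  pose proof (dominated_tail _ _ _ Hdom m) as Ht.
  rewrite !tail_mass_cons, !tail_mass_above in Ht by exact Hm_top.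
  destruct (Rle_dec m m); [unfold e; lra|lra].
Qed.

Lemma sumL_shift g : sumL L (fun h => if Req_EM_T h m2 then g h else 0) = g m2.
Proof. now apply sumL_indicator. Qed.

Lemma dominated_shift : dominated L b a'.
Proof.
  destruct Hdom as [Hb Ha Hmass Htail].
  rewrite !sumL_cons in Hmass.
  pose proof excess_nonneg.
  split.
  - auto with datatypes.
  - intros h Hh. unfold a'. assert (0 <= a h) by auto with datatypes.
    destruct (Req_EM_T h m2); lra.
  - unfold a'. rewrite sumL_plus, (sumL_shift (fun _ => e)). unfold e. lra.
  - intros t. specialize (Htail t). rewrite !tail_mass_cons in Htail.
    destruct (Rle_dec t m2) as [Htm2|Htm2].
    + destruct (Rle_dec t m) as [_|Htm]; [|pose proof (Hm_top m2 Hm2_in); lra].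
      unfold tail_mass in *.
      rewrite (sumL_ext _ (fun h => if Rle_dec t h then a' h else 0)
                 (fun h => (if Rle_dec t h then a h else 0) + (if Req_EM_T h m2 then e else 0))).
      * rewrite sumL_plus, (sumL_shift (fun _ => e)). unfold e. lra.
      * intros h Hh. unfold a'.
        destruct (Rle_dec t h); destruct (Req_EM_T h m2); subst; lra.
    + rewrite tail_mass_above.
      * apply tail_mass_nonneg. intros h Hh. unfold a'. assert (0 <= a h) by auto with datatypes.
        pose proof excess_nonneg. destruct (Req_EM_T h m2); lra.
      * intros x Hx. specialize (Hm2_top x Hx). lra.
Qed.

Hypothesis HK' : downward_kernel L a' b K'.

Let theta := if Rlt_dec 0 (a m) then b m / a m else 1.

Lemma theta_facts : 0 <= theta <= 1 /\ a m * theta = b m /\ a m * (1 - theta) = e.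
Proof.
  pose proof excess_nonneg as He. unfold e in He.
  pose proof (dominated_lower_nonneg _ _ _ Hdom m (or_introl eq_refl)).
  unfold theta, e. destruct (Rlt_dec 0 (a m)) as [Hpos|Hz].
  - repeat split.
    + apply Rmult_le_pos; [lra|]. left. now apply Rinv_0_lt_compat.
    + apply Rmult_le_reg_l with (a m); [lra|]. field_simplify; lra.
    + field. lra.
    + field_simplify; [lra|lra].
  - assert (a m = 0) by (pose proof (dominated_upper_nonneg _ _ _ Hdom m (or_introl eq_refl)); lra).
    repeat split; lra.
Qed.

Lemma downward_kernel_extend : exists K, downward_kernel (m :: L) a b K.
Proof.
  destruct theta_facts as [[Ht0 Ht1] [Hstay Hsend]].
  destruct HK' as [HK0 HKrow HKpush HKdown].
  assert (Hne : forall x, In x L -> x <> m) by (intros x Hx ->; specialize (Hm_top m Hx); lra).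
  exists (fun h h' =>
    if Req_EM_T h m then (if Req_EM_T h' m then theta else (1 - theta) * K' m2 h')
    else (if Req_EM_T h' m then 0 else K' h h')).
  split.
  - intros h h' Hh Hh'.
    destruct (Req_EM_T h m) as [->|Hhm]; destruct (Req_EM_T h' m) as [->|Hh'm]; try lra.
    + apply Rmult_le_pos; [lra|]. apply HK0; auto.
      destruct Hh'; [congruence|auto].
    + apply HK0; [destruct Hh|destruct Hh']; congruence || auto.
  - intros h Hh. rewrite sumL_cons.
    destruct (Req_EM_T h m) as [->|Hhm]; destruct (Req_EM_T m m); try congruence.
    + rewrite (sumL_ext _ _ (fun h' => (1 - theta) * K' m2 h')).
      * rewrite sumL_scal_l, HKrow by auto. lra.
      * intros h' Hh'. destruct (Req_EM_T h' m); [now destruct (Hne h')|reflexivity].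
    + destruct Hh as [Hh|Hh]; [congruence|].
      rewrite (sumL_ext _ _ (K' h)).
      * rewrite HKrow by exact Hh. lra.
      * intros h' Hh'. destruct (Req_EM_T h' m); [now destruct (Hne h')|reflexivity].
  - intros h' Hh'. rewrite sumL_cons. destruct (Req_EM_T m m) as [_|]; [|congruence].
    destruct (Req_EM_T h' m) as [->|Hh'm].
    + rewrite sumL_eq0; [lra|]. intros h Hh.
      destruct (Req_EM_T h m); [now destruct (Hne h)|lra].
    + destruct Hh' as [Hh'|Hh']; [congruence|].
      rewrite <- (HKpush h' Hh').
      assert (Hstay_L : sumL L (fun h =>
                          a h * (if Req_EM_T h m then (1 - theta) * K' m2 h' else K' h h')) =
                        sumL L (fun h => a h * K' h h')).
      { apply sumL_ext. intros h Hh. destruct (Req_EM_T h m); [now destruct (Hne h)|reflexivity]. }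
      assert (Hshift : sumL L (fun h => a' h * K' h h') =
                       sumL L (fun h => a h * K' h h') + e * K' m2 h').
      { rewrite <- (sumL_shift (fun h => e * K' h h')), <- sumL_plus.
        apply sumL_ext. intros h _. unfold a'. destruct (Req_EM_T h m2); lra. }
      rewrite Hstay_L, Hshift, <- Hsend. ring.
  - intros h h' Hh Hh' Hah Hk.
    destruct (Req_EM_T h m) as [->|Hhm].
    + destruct Hh' as [<-|Hh']; [lra|]. left. auto.
    + destruct (Req_EM_T h' m); [lra|].
      destruct Hh as [|Hh]; [congruence|]. destruct Hh' as [|Hh']; [congruence|].
      apply HKdown; auto. unfold a'. pose proof excess_nonneg.
      destruct (Req_EM_T h m2); lra.
Qed.

End Extension.

Lemma downward_kernel_exists L a b :
  NoDup L -> dominated L b a -> exists K, downward_kernel L a b K.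
Proof.
  remember (length L) as n eqn:En. revert L En a b.
  induction n as [n IH] using lt_wf_ind. intros L -> a b Hnd Hdom.
  destruct L as [|x0 L0].
  { exists (fun _ _ => 0). split; cbn; tauto. }
  destruct (max_exists (x0 :: L0)) as [m [Hm Hmax]]; [discriminate|].
  destruct (in_split _ _ Hm) as [l1 [l2 E]].
  assert (P : Permutation (x0 :: L0) (m :: l1 ++ l2))
    by (rewrite E; apply Permutation_sym, Permutation_middle).
  set (L := l1 ++ l2) in P.
  enough (HK : exists K, downward_kernel (m :: L) a b K).
  { destruct HK as [K HK]. exists K.
    exact (downward_kernel_perm _ _ _ _ _ (Permutation_sym P) HK). }
  apply (dominated_perm _ _ _ _ P) in Hdom.
  pose proof (Permutation_NoDup P Hnd) as HndmL.
  apply NoDup_cons_iff in HndmL as [HmL HndL].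
  assert (Hm_top : forall x, In x L -> x < m).
  { intros x Hx. assert (x <> m) by (intros ->; auto).
    assert (x <= m) by (apply Hmax, (Permutation_in _ (Permutation_sym P)); now right). lra. }
  destruct L as [|y L'] eqn:EL.
  { eexists. now apply downward_kernel_singleton. }
  rewrite <- EL in *.
  destruct (max_exists L) as [m2 [Hm2 Hm2_top]]; [rewrite EL; discriminate|].
  destruct (IH (length L)) with (L := L) (b := b)
    (a := fun h => a h + (if Req_EM_T h m2 then a m - b m else 0)) as [K' HK'].
  - rewrite (Permutation_length P). cbn. lia.
  - reflexivity.
  - exact HndL.
  - now apply dominated_shift.
  - now apply (downward_kernel_extend m m2 L a b K').
Qed.

Section Chain.
Variables (Alh Arh : nat) (hs : list R).

Lemma sumL_states (F : st -> R) :
  sumL (states Alh Arh hs) F =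
  sumL (seq 1 Alh) (fun al => sumL (seq 1 Arh) (fun ar => sumL hs (fun h => F (al, ar, h)))).
Proof.
  unfold states. rewrite sumL_flat_map. apply sumL_ext. intros al _.
  rewrite sumL_flat_map. apply sumL_ext. intros ar _. apply sumL_map.
Qed.

Lemma In_states al ar h :
  In (al, ar, h) (states Alh Arh hs) <->
  (1 <= al <= Alh)%nat /\ (1 <= ar <= Arh)%nat /\ In h hs.
Proof.
  unfold states. rewrite in_flat_map. split.
  - intros [x [Hx H]]. rewrite in_flat_map in H. destruct H as [y [Hy H]].
    rewrite in_map_iff in H. destruct H as [z [E Hz]]. injection E as -> -> ->.
    apply in_seq in Hx, Hy. repeat split; auto; lia.
  - intros (Hal & Har & Hh). exists al. split; [apply in_seq; lia|].
    apply in_flat_map. exists ar. split; [apply in_seq; lia|]. apply in_map_iff. eauto.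
Qed.

Definition moves_to (al ar al' ar' : nat) (w : bool * bool) : bool :=
  andb (Nat.eqb (fst (next Alh Arh al ar w)) al') (Nat.eqb (snd (next Alh Arh al ar w)) ar').

Lemma trans_eq p pi al ar h al' ar' h' :
  trans Alh Arh p pi (al, ar, h) (al', ar', h') =
  p h' * sumL actions (fun w => if moves_to al ar al' ar' w then pi al ar h w else 0).
Proof. reflexivity. Qed.

Definition action_marginal (p : R -> R) (pi : Policy) (al ar : nat) (w : bool * bool) : R :=
  sumL hs (fun h => p h * pi al ar h w).

(** The channel is drawn afresh in every slot, so the AoI pair alone is a Markov
    chain, driven only by the channel-averaged action probabilities [Q]. *)
Fixpoint aoi_law (Q : nat -> nat -> bool * bool -> R) (a0l a0r n al' ar' : nat) : R :=
  match n with
  | O => if andb (Nat.eqb al' a0l) (Nat.eqb ar' a0r) then 1 else 0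
  | S n => sumL (seq 1 Alh) (fun al => sumL (seq 1 Arh) (fun ar =>
      aoi_law Q a0l a0r n al ar *
      sumL actions (fun w => if moves_to al ar al' ar' w then Q al ar w else 0)))
  end.

Lemma dist_aoi_law p pi a0l a0r n al ar h :
  Defs.dist Alh Arh hs p pi a0l a0r n (al, ar, h) =
  aoi_law (action_marginal p pi) a0l a0r n al ar * p h.
Proof.
  revert al ar h. induction n as [|n IH]; intros al' ar' h'; cbn [Defs.dist aoi_law].
  - destruct (andb _ _); lra.
  - rewrite sumL_states, <- sumL_scal_r. apply sumL_ext. intros al _.
    rewrite <- sumL_scal_r. apply sumL_ext. intros ar _.
    rewrite (sumL_ext _ _ (fun h => aoi_law (action_marginal p pi) a0l a0r n al ar * p h' *
      sumL actions (fun w => p h * if moves_to al ar al' ar' w then pi al ar h w else 0))).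
    2:{ intros h _. rewrite IH, trans_eq, (sumL_scal_l actions (p h)). ring. }
    rewrite sumL_scal_l, sumL_swap. unfold action_marginal.
    rewrite (sumL_ext actions _ (fun w => if moves_to al ar al' ar' w
                                       then sumL hs (fun h => p h * pi al ar h w) else 0)).
    + ring.
    + intros w _. destruct (moves_to al ar al' ar' w); [reflexivity|].
      apply sumL_eq0. intros. ring.
Qed.

Lemma aoi_law_ext Q1 Q2 a0l a0r n al ar :
  (forall al ar w, Q1 al ar w = Q2 al ar w) ->
  aoi_law Q1 a0l a0r n al ar = aoi_law Q2 a0l a0r n al ar.
Proof.
  intros E. revert al ar. induction n as [|n IH]; intros al' ar'; cbn [aoi_law]; [reflexivity|].
  apply sumL_ext. intros al _. apply sumL_ext. intros ar _. rewrite IH. f_equal.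
  apply sumL_ext. intros w _. now rewrite E.
Qed.

Lemma aoi_law_nonneg Q a0l a0r n al ar :
  (forall al ar w, (1 <= al <= Alh)%nat -> (1 <= ar <= Arh)%nat -> 0 <= Q al ar w) ->
  0 <= aoi_law Q a0l a0r n al ar.
Proof.
  intros HQ. revert al ar. induction n as [|n IH]; intros al' ar'; cbn [aoi_law].
  - destruct (andb _ _); lra.
  - apply sumL_nonneg. intros al Hal. apply sumL_nonneg. intros ar Har.
    apply in_seq in Hal, Har. apply Rmult_le_pos; [apply IH|].
    apply sumL_nonneg. intros w _. destruct (moves_to al ar al' ar' w); [apply HQ; lia|lra].
Qed.

Lemma action_marginal_nonneg p pi al ar w :
  valid_policy Alh Arh hs pi -> (forall h, In h hs -> 0 <= p h) ->
  (1 <= al <= Alh)%nat -> (1 <= ar <= Arh)%nat -> 0 <= action_marginal p pi al ar w.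
Proof.
  intros Hpi Hp Hal Har. apply sumL_nonneg. intros h Hh.
  apply Rmult_le_pos; [auto|]. now apply (Hpi al ar h).
Qed.

Definition stage_cost (Cs : R) (Cu : R -> R) (p : R -> R) (pi : Policy) (al ar : nat) : R :=
  sumL hs (fun h => p h * sumL actions (fun w => pi al ar h w * cost Cs Cu w h)).

Lemma EAr_aoi_law p pi a0l a0r n :
  EAr Alh Arh hs p pi a0l a0r n =
  sumL (seq 1 Alh) (fun al => sumL (seq 1 Arh) (fun ar =>
    aoi_law (action_marginal p pi) a0l a0r n al ar * INR ar * sumL hs p)).
Proof.
  unfold EAr. rewrite sumL_states. apply sumL_ext. intros al _. apply sumL_ext. intros ar _.
  rewrite <- sumL_scal_l. apply sumL_ext. intros h _. rewrite dist_aoi_law. ring.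
Qed.

Lemma ECost_aoi_law p pi a0l a0r Cs Cu n :
  ECost Alh Arh hs p pi a0l a0r Cs Cu n =
  sumL (seq 1 Alh) (fun al => sumL (seq 1 Arh) (fun ar =>
    aoi_law (action_marginal p pi) a0l a0r n al ar * stage_cost Cs Cu p pi al ar)).
Proof.
  unfold ECost, stage_cost. rewrite sumL_states. apply sumL_ext. intros al _.
  apply sumL_ext. intros ar _.
  rewrite <- sumL_scal_l. apply sumL_ext. intros h _. rewrite dist_aoi_law. ring.
Qed.

Lemma cost_nonneg Cs Cu w h : 0 <= Cs -> 0 <= Cu h -> 0 <= cost Cs Cu w h.
Proof. intros. unfold cost. destruct w as [[|] [|]]; cbn; lra. Qed.

Lemma ECost_nonneg p pi a0l a0r Cs Cu n :
  valid_policy Alh Arh hs pi -> (forall h, In h hs -> 0 <= p h) ->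
  0 <= Cs -> (forall h, In h hs -> 0 <= Cu h) ->
  0 <= ECost Alh Arh hs p pi a0l a0r Cs Cu n.
Proof.
  intros Hpi Hp HCs HCu. rewrite ECost_aoi_law.
  apply sumL_nonneg. intros al Hal. apply sumL_nonneg. intros ar Har. apply in_seq in Hal, Har.
  apply Rmult_le_pos.
  - apply aoi_law_nonneg. intros. now apply action_marginal_nonneg.
  - apply sumL_nonneg. intros h Hh. apply Rmult_le_pos; [auto|].
    apply sumL_nonneg. intros w _.
    apply Rmult_le_pos; [apply Hpi; auto; lia|auto using cost_nonneg].
Qed.

Section SameMarginal.
Variables (p1 p2 : R -> R) (pi1 pi2 : Policy).
Hypothesis Hmarg :
  forall al ar w, action_marginal p1 pi1 al ar w = action_marginal p2 pi2 al ar w.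

Lemma EAr_eq_of_marginal a0l a0r n :
  sumL hs p1 = sumL hs p2 ->
  EAr Alh Arh hs p1 pi1 a0l a0r n = EAr Alh Arh hs p2 pi2 a0l a0r n.
Proof.
  intros Hmass. rewrite !EAr_aoi_law, Hmass.
  apply sumL_ext. intros al _. apply sumL_ext. intros ar _.
  now rewrite (aoi_law_ext _ _ _ _ n _ _ Hmarg).
Qed.

Lemma ECost_le_of_marginal a0l a0r Cs Cu n :
  (forall al ar w, (1 <= al <= Alh)%nat -> (1 <= ar <= Arh)%nat ->
     0 <= action_marginal p2 pi2 al ar w) ->
  (forall al ar, (1 <= al <= Alh)%nat -> (1 <= ar <= Arh)%nat ->
     stage_cost Cs Cu p1 pi1 al ar <= stage_cost Cs Cu p2 pi2 al ar) ->
  ECost Alh Arh hs p1 pi1 a0l a0r Cs Cu n <= ECost Alh Arh hs p2 pi2 a0l a0r Cs Cu n.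
Proof.
  intros Hnonneg Hstage. rewrite !ECost_aoi_law.
  apply sumL_le. intros al Hal. apply sumL_le. intros ar Har. apply in_seq in Hal, Har.
  rewrite (aoi_law_ext _ _ _ _ n _ _ Hmarg).
  apply Rmult_le_compat_l; [apply aoi_law_nonneg; auto|apply Hstage; lia].
Qed.

End SameMarginal.

End Chain.

Definition st_eq_dec (x y : st) : {x = y} + {x <> y}.
Proof. decide equality; [apply Req_EM_T|]. decide equality; apply Nat.eq_dec. Defined.

Lemma in_actions w : In w actions.
Proof. destruct w as [[|] [|]]; cbn; tauto. Qed.

Section Reachability.
Variables (Alh Arh : nat) (hs : list R) (p : R -> R) (pi : Policy).
Hypothesis HAl : (1 <= Alh)%nat.
Hypothesis HAr : (1 <= Arh)%nat.
Hypothesis Hp : is_pmf hs p.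
Hypothesis Hpi : valid_policy Alh Arh hs pi.

Lemma next_in_range al ar w :
  (1 <= al <= Alh)%nat -> (1 <= ar <= Arh)%nat ->
  (1 <= fst (next Alh Arh al ar w) <= Alh)%nat /\ (1 <= snd (next Alh Arh al ar w) <= Arh)%nat.
Proof. intros. destruct w as [[|] [|]]; cbn; lia. Qed.

Lemma moves_to_next al ar w :
  moves_to Alh Arh al ar (fst (next Alh Arh al ar w)) (snd (next Alh Arh al ar w)) w = true.
Proof. unfold moves_to. now rewrite !Nat.eqb_refl. Qed.

Lemma trans_pos_inv al ar h al' ar' h' :
  In h' hs -> trans Alh Arh p pi (al, ar, h) (al', ar', h') > 0 ->
  0 < p h' /\ exists w, moves_to Alh Arh al ar al' ar' w = true /\ 0 < pi al ar h w.
Proof.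
  intros Hh' Ht. rewrite trans_eq in Ht.
  assert (0 <= p h') by (apply Hp; exact Hh').
  assert (Hpos : 0 < p h') by (destruct (Req_dec (p h') 0) as [E|]; [rewrite E in Ht|]; lra).
  split; [exact Hpos|].
  assert (0 < sumL actions (fun w => if moves_to Alh Arh al ar al' ar' w then pi al ar h w else 0))
    as Hsum by (apply (Rmult_lt_reg_l (p h')); lra).
  apply sumL_pos_witness in Hsum as [w [_ Hw]].
  exists w. destruct (moves_to Alh Arh al ar al' ar' w); [auto|lra].
Qed.

Lemma trans_pos al ar h al' ar' h' w :
  (1 <= al <= Alh)%nat -> (1 <= ar <= Arh)%nat -> In h hs ->
  0 < p h' -> moves_to Alh Arh al ar al' ar' w = true -> 0 < pi al ar h w ->
  trans Alh Arh p pi (al, ar, h) (al', ar', h') > 0.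
Proof.
  intros Hal Har Hh Hp' Hmv Hw. rewrite trans_eq. apply Rmult_lt_0_compat; [exact Hp'|].
  apply Rlt_le_trans with (1 := Hw).
  replace (pi al ar h w)
    with (if moves_to Alh Arh al ar al' ar' w then pi al ar h w else 0) by now rewrite Hmv.
  apply (sumL_term_le actions
           (fun w => if moves_to Alh Arh al ar al' ar' w then pi al ar h w else 0));
    [|apply in_actions].
  intros v _. destruct (moves_to Alh Arh al ar al' ar' v); [apply Hpi; auto|lra].
Qed.

Lemma reach_trans s t u :
  reach Alh Arh hs p pi s t -> reach Alh Arh hs p pi t u -> reach Alh Arh hs p pi s u.
Proof. induction 1; intros; auto. eapply reach_step; eauto. Qed.

Lemma reach_in_states s t :
  reach Alh Arh hs p pi s t -> s = t \/ In t (states Alh Arh hs).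
Proof. induction 1 as [|s s' s'' Hs' _ _ [<-|]]; auto. Qed.

(** [s] reaches a recurrent state: otherwise one could descend forever along
    strictly shrinking sets of reachable states. *)
Lemma reach_recurrent s :
  In s (states Alh Arh hs) ->
  exists r, In r (states Alh Arh hs) /\ reach Alh Arh hs p pi s r /\ recurrent Alh Arh hs p pi r.
Proof.
  intros Hs.
  assert (Hreach : forall t, reach Alh Arh hs p pi s t -> In t (states Alh Arh hs))
    by (intros t Ht; destruct (reach_in_states _ _ Ht) as [<-|]; auto).
  remember (states Alh Arh hs) as C eqn:EC in Hreach. clear EC.
  remember (length C) as n eqn:En. assert (Hlen : (length C <= n)%nat) by lia. clear En.
  revert s C Hs Hreach Hlen. induction n as [|n IH]; intros s C Hs Hreach Hlen.
  { destruct C; [|cbn in Hlen; lia]. destruct (Hreach s (reach_refl _ _ _ _ _ s)). }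
  destruct (classic (recurrent Alh Arh hs p pi s)) as [Hrec|Hrec].
  { exists s. repeat split; auto. constructor. }
  apply not_all_ex_not in Hrec as [s' Hrec]. apply imply_to_and in Hrec as [Hss' Hs's].
  assert (Hs' : In s' (states Alh Arh hs)) by (destruct (reach_in_states _ _ Hss') as [<-|]; auto).
  destruct (IH s' (remove st_eq_dec s C)) as [r (Hr & Hs'r & Hrec)]; auto.
  - intros t Ht. apply in_in_remove.
    + intros ->. contradiction.
    + apply Hreach. eapply reach_trans; eauto.
  - pose proof (remove_length_lt st_eq_dec C s (Hreach s (reach_refl _ _ _ _ _ s))). lia.
  - exists r. repeat split; auto. eapply reach_trans; eauto.
Qed.

Definition reach1 (s t : st) : Prop :=
  exists s', In s' (states Alh Arh hs) /\ trans Alh Arh p pi s s' > 0 /\ reach Alh Arh hs p pi s' t.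

Lemma reach_reach1_trans s t u :
  reach Alh Arh hs p pi s t -> reach1 t u -> reach1 s u.
Proof.
  intros Hst [t' (Ht' & Htr & Hr)]. destruct Hst as [s|s s' t Hs' Hstr Hs't].
  - now exists t'.
  - exists s'. repeat split; auto. eapply reach_trans; [exact Hs't|]. econstructor; eauto.
Qed.

Lemma unichain_common_target :
  unichain Alh Arh hs p pi ->
  exists r, In r (states Alh Arh hs) /\ forall s, In s (states Alh Arh hs) -> reach1 s r.
Proof.
  intros HU.
  destruct (sumL_pos_witness hs p) as [g0 [Hg0 Hpg0]]; [rewrite (proj2 Hp); lra|].
  assert (Hs0 : In (1%nat, 1%nat, g0) (states Alh Arh hs))
    by (apply In_states; repeat split; auto; lia).
  destruct (reach_recurrent _ Hs0) as [r (Hr & _ & Hrec)].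
  exists r. split; [exact Hr|].
  assert (Hrr : reach1 r r).
  { destruct r as [[b1 b2] g]. apply In_states in Hr as (Hb1 & Hb2 & Hg).
    destruct (sumL_pos_witness actions (pi b1 b2 g)) as [w [_ Hw]].
    { rewrite (proj2 (Hpi b1 b2 g Hb1 Hb2 Hg)). lra. }
    destruct (next_in_range b1 b2 w Hb1 Hb2) as [Hn1 Hn2].
    set (s2 := (fst (next Alh Arh b1 b2 w), snd (next Alh Arh b1 b2 w), g0)).
    assert (Hs2 : In s2 (states Alh Arh hs)) by (apply In_states; auto).
    assert (Htr : trans Alh Arh p pi (b1, b2, g) s2 > 0)
      by (apply trans_pos with w; auto using moves_to_next).
    exists s2. repeat split; auto. apply Hrec. econstructor; eauto. constructor. }
  intros s Hs. apply reach_reach1_trans with r; [|exact Hrr].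
  destruct (reach_recurrent _ Hs) as [r' (Hr' & Hsr' & Hrec')].
  eapply reach_trans; [exact Hsr'|]. apply HU; auto.
Qed.

End Reachability.

Lemma unichain_of_common_target Alh Arh hs p pi z :
  (forall s, In s (states Alh Arh hs) -> reach Alh Arh hs p pi s z) ->
  unichain Alh Arh hs p pi.
Proof.
  intros Hz s1 s2 Hs1 Hs2 _ Hrec2.
  apply reach_trans with z; [auto|]. apply Hrec2. auto.
Qed.

(** * Policies driven by a coupled channel *)

Lemma cost_antitone Cs Cu w h h' : Cu h <= Cu h' -> cost Cs Cu w h <= cost Cs Cu w h'.
Proof. intros. unfold cost. destruct w as [[|] [|]]; cbn; lra. Qed.

(** Under channel [I] the device draws a [J]-channel state [h'] from the kernel
    [K h] and plays the [J]-policy as if the channel were [h']. *)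
Definition coupled_policy (hs : list R) (K : R -> R -> R) (piJ : Policy) : Policy :=
  fun al ar h w => sumL hs (fun h' => K h h' * piJ al ar h' w).

Section Coupling.
Variables (Alh Arh : nat) (hs : list R) (pI pJ : R -> R) (K : R -> R -> R) (piJ : Policy).
Hypothesis HpI : is_pmf hs pI.
Hypothesis HpJ : is_pmf hs pJ.
Hypothesis HK : downward_kernel hs pI pJ K.
Hypothesis HpiJ : valid_policy Alh Arh hs piJ.

Let piI := coupled_policy hs K piJ.

Lemma coupled_policy_valid : valid_policy Alh Arh hs piI.
Proof.
  intros al ar h Hal Har Hh. split.
  - intros w. apply sumL_nonneg. intros h' Hh'.
    apply Rmult_le_pos; [now apply (kernel_nonneg _ _ _ _ HK)|now apply HpiJ].
  - unfold piI, coupled_policy. rewrite <- sumL_swap.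
    rewrite (sumL_ext hs _ (K h)).
    + exact (kernel_row _ _ _ _ HK h Hh).
    + intros h' Hh'. rewrite sumL_scal_l, (proj2 (HpiJ al ar h' Hal Har Hh')). ring.
Qed.

Lemma action_marginal_coupled al ar w :
  action_marginal hs pI piI al ar w = action_marginal hs pJ piJ al ar w.
Proof.
  unfold action_marginal, piI, coupled_policy.
  rewrite (sumL_ext hs _ (fun h => sumL hs (fun h' => pI h * K h h' * piJ al ar h' w))).
  2:{ intros h _. rewrite <- sumL_scal_l. apply sumL_ext. intros. ring. }
  rewrite sumL_swap. apply sumL_ext. intros h' Hh'.
  now rewrite sumL_scal_r, (kernel_push _ _ _ _ HK).
Qed.

(** The kernel only moves to worse channels, where uploading costs more. *)
Lemma stage_cost_coupled_le Cs Cu al ar :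
  (forall h1 h2, In h1 hs -> In h2 hs -> h1 <= h2 -> Cu h2 <= Cu h1) ->
  (1 <= al <= Alh)%nat -> (1 <= ar <= Arh)%nat ->
  stage_cost hs Cs Cu pI piI al ar <= stage_cost hs Cs Cu pJ piJ al ar.
Proof.
  intros HCu Hal Har. unfold stage_cost.
  set (F h h' w := pI h * K h h' * piJ al ar h' w).
  transitivity (sumL hs (fun h => sumL actions (fun w =>
                  sumL hs (fun h' => F h h' w * cost Cs Cu w h)))).
  { right. apply sumL_ext. intros h _. rewrite <- sumL_scal_l. apply sumL_ext. intros w _.
    unfold piI, coupled_policy. rewrite <- sumL_scal_r, <- sumL_scal_l.
    apply sumL_ext. intros. unfold F. ring. }
  transitivity (sumL hs (fun h => sumL actions (fun w =>
                  sumL hs (fun h' => F h h' w * cost Cs Cu w h')))).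
  { apply sumL_le. intros h Hh. apply sumL_le. intros w _. apply sumL_le. intros h' Hh'.
    assert (HpIh : 0 <= pI h) by now apply HpI.
    assert (HKh : 0 <= K h h') by now apply (kernel_nonneg _ _ _ _ HK).
    assert (Hpih : 0 <= piJ al ar h' w) by now apply HpiJ.
    assert (HF : 0 <= F h h' w) by (unfold F; repeat apply Rmult_le_pos; auto).
    destruct HF as [HF|HF]; [|rewrite <- HF; lra].
    apply Rmult_le_compat_l; [lra|]. apply cost_antitone, HCu; auto.
    apply Rmult_pos_factors in HF as [HF _]; [|apply Rmult_le_pos; auto|auto].
    apply Rmult_pos_factors in HF as [HpIh' HKh']; auto.
    now apply (kernel_down _ _ _ _ HK). }
  right.
  rewrite (sumL_ext hs _ (fun h => sumL hs (fun h' =>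
             sumL actions (fun w => F h h' w * cost Cs Cu w h')))).
  2:{ intros. apply sumL_swap. }
  rewrite sumL_swap. apply sumL_ext. intros h' Hh'.
  rewrite <- (kernel_push _ _ _ _ HK h' Hh'), <- sumL_scal_r. apply sumL_ext. intros h _.
  rewrite <- sumL_scal_l. apply sumL_ext. intros w _. unfold F. ring.
Qed.

Lemma coupled_policy_ge al ar h h' w :
  (1 <= al <= Alh)%nat -> (1 <= ar <= Arh)%nat -> In h hs -> In h' hs ->
  K h h' * piJ al ar h' w <= piI al ar h w.
Proof.
  intros Hal Har Hh Hh'.
  apply (sumL_term_le hs (fun h' => K h h' * piJ al ar h' w)); [|exact Hh'].
  intros y Hy. apply Rmult_le_pos; [now apply (kernel_nonneg _ _ _ _ HK)|now apply HpiJ].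
Qed.

Lemma coupled_step al ar h' x al' ar' h1 x1 :
  In (al, ar, h') (states Alh Arh hs) -> In h1 hs -> In x hs -> 0 < K x h' -> 0 < pI x1 ->
  trans Alh Arh pJ piJ (al, ar, h') (al', ar', h1) > 0 ->
  trans Alh Arh pI piI (al, ar, x) (al', ar', x1) > 0.
Proof.
  intros Hs Hh1 Hx HKx Hx1 Htr. apply In_states in Hs as (Hal & Har & Hh').
  destruct (@trans_pos_inv Alh Arh hs pJ piJ HpJ _ _ _ _ _ _ Hh1 Htr) as [_ [w [Hmv Hw]]].
  apply (trans_pos Alh Arh hs) with w; auto using coupled_policy_valid.
  apply Rlt_le_trans with (K x h' * piJ al ar h' w).
  - now apply Rmult_lt_0_compat.
  - now apply coupled_policy_ge.
Qed.

Lemma coupled_channel h1 :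
  In h1 hs -> 0 < pJ h1 -> exists x1, In x1 hs /\ 0 < pI x1 /\ 0 < K x1 h1.
Proof.
  intros Hh1 Hpos. rewrite <- (kernel_push _ _ _ _ HK h1 Hh1) in Hpos.
  apply sumL_pos_witness in Hpos as [x1 [Hx1 Hpos]]. exists x1. split; [exact Hx1|].
  apply Rmult_pos_factors; [apply HpI | apply (kernel_nonneg _ _ _ _ HK) | ]; auto.
Qed.

(** The last simulated step may land on any channel state of positive [I]-mass,
    which is why the [J]-path must make at least one step. *)
Lemma coupled_reach al ar h' x b1 b2 g y :
  In (al, ar, h') (states Alh Arh hs) -> In x hs -> 0 < K x h' -> In y hs -> 0 < pI y ->
  reach1 Alh Arh hs pJ piJ (al, ar, h') (b1, b2, g) ->
  reach Alh Arh hs pI piI (al, ar, x) (b1, b2, y).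
Proof.
  intros Hs Hx HKx Hy Hpy [s1 (Hs1 & Htr & Hr)].
  remember (b1, b2, g) as t eqn:Et.
  revert al ar h' x Hs Hx HKx Htr.
  induction Hr as [s|s s' t Hs' Htr' Hr IH]; intros al ar h' x Hs Hx HKx Htr.
  - subst s. apply In_states in Hs1 as (Hb1 & Hb2 & Hg).
    apply reach_step with (b1, b2, y); [apply In_states; auto| |constructor].
    now apply coupled_step with h' g.
  - destruct s as [[c1 c2] h1].
    apply In_states in Hs1 as Hs1'. destruct Hs1' as (Hc1 & Hc2 & Hh1).
    destruct (@trans_pos_inv Alh Arh hs pJ piJ HpJ _ _ _ _ _ _ Hh1 Htr) as [Hph1 _].
    destruct (coupled_channel h1 Hh1 Hph1) as [x1 (Hx1 & Hpx1 & HKx1)].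
    apply reach_step with (c1, c2, x1); [apply In_states; auto| |].
    + now apply coupled_step with h' h1.
    + eapply IH; eauto.
Qed.

Lemma coupled_unichain (HAl : (1 <= Alh)%nat) (HAr : (1 <= Arh)%nat) :
  unichain Alh Arh hs pJ piJ -> unichain Alh Arh hs pI piI.
Proof.
  intros HU.
  destruct (@unichain_common_target Alh Arh hs pJ piJ HAl HAr HpJ HpiJ HU)
    as [[[b1 b2] g] [_ Htarget]].
  destruct (sumL_pos_witness hs pI) as [y [Hy Hpy]]; [rewrite (proj2 HpI); lra|].
  apply unichain_of_common_target with (b1, b2, y).
  intros [[al ar] x] Hs. apply In_states in Hs as Hs'. destruct Hs' as (Hal & Har & Hx).
  destruct (sumL_pos_witness hs (K x)) as [h' [Hh' HKx]].
  { rewrite (kernel_row _ _ _ _ HK x Hx). lra. }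
  assert (Hs'' : In (al, ar, h') (states Alh Arh hs)) by (apply In_states; auto).
  now apply coupled_reach with h' g; auto.
Qed.

End Coupling.

Lemma is_limsup_le (u v : nat -> R) c :
  (forall n, 0 <= u n) -> (forall n, u n <= v n) -> is_limsup v c ->
  exists c', is_limsup u c' /\ c' <= c.
Proof.
  intros Hu0 Huv Hv.
  destruct (Lim_seq.ex_LimSup_seq u) as [[l| |] Hl]; unfold Lim_seq.is_LimSup_seq in Hl.
  - exists l. split.
    + intros eps Heps. destruct (Hl (mkposreal eps Heps)) as [Hfreq [N HN]]. cbn in *. split.
      * exists N. intros n Hn. specialize (HN n Hn). lra.
      * intros N'. destruct (Hfreq N') as [n [Hn Hun]]. exists n. split; [lia|lra].
    + apply Rnot_lt_le. intros Hlt.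
      assert (Heps : (l - c) / 2 > 0) by lra.
      destruct (Hv _ Heps) as [[N HN] _].
      destruct (Hl (mkposreal _ Heps)) as [Hfreq _]. cbn in Hfreq.
      destruct (Hfreq N) as [n [Hn Hun]]. specialize (HN n Hn). specialize (Huv n). lra.
  - exfalso. destruct (Hv 1) as [[N HN] _]; [lra|].
    destruct (Hl (c + 1) N) as [n [Hn Hun]]. specialize (HN n Hn). specialize (Huv n). lra.
  - exfalso. destruct (Hl 0) as [N HN]. specialize (HN N (le_n _)). specialize (Hu0 N). lra.
Qed.

Lemma is_limsup_ext u v l : (forall n, u n = v n) -> is_limsup u l -> is_limsup v l.
Proof.
  intros E H eps Heps. destruct (H eps Heps) as [[N HN] Hfreq]. split.
  - exists N. intros n Hn. rewrite <- E. auto.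
  - intros N'. destruct (Hfreq N') as [n [Hn Hun]]. exists n. rewrite <- E. auto.
Qed.

Lemma inv_INR_nonneg T : 0 <= / INR T.
Proof.
  destruct T as [|T]; [cbn; rewrite Rinv_0; lra|].
  left. apply Rinv_0_lt_compat, lt_0_INR. lia.
Qed.

Lemma cesaro_le (u v : nat -> R) T : (forall n, u n <= v n) -> cesaro u T <= cesaro v T.
Proof.
  intros H. unfold cesaro, Rdiv. apply Rmult_le_compat_r; [apply inv_INR_nonneg|].
  apply sumL_le. auto.
Qed.

Lemma cesaro_nonneg (u : nat -> R) T : (forall n, 0 <= u n) -> 0 <= cesaro u T.
Proof.
  intros H. unfold cesaro, Rdiv. apply Rmult_le_pos; [|apply inv_INR_nonneg].
  apply sumL_nonneg. auto.
Qed.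

Lemma fosd_dominated hs pI pJ :
  is_pmf hs pI -> is_pmf hs pJ ->
  (forall f : R -> R,
     (forall h1 h2, In h1 hs -> In h2 hs -> h1 <= h2 -> f h1 <= f h2) ->
     expect hs pI f >= expect hs pJ f) ->
  dominated hs pJ pI.
Proof.
  intros [HpI HI1] [HpJ HJ1] Hfosd. split; auto.
  - congruence.
  - intros t. specialize (Hfosd (fun h => if Rle_dec t h then 1 else 0)).
    unfold expect, tail_mass in *.
    rewrite (sumL_ext hs (fun h => if Rle_dec t h then pJ h else 0)
                         (fun h => pJ h * (if Rle_dec t h then 1 else 0))),
            (sumL_ext hs (fun h => if Rle_dec t h then pI h else 0)
                         (fun h => pI h * (if Rle_dec t h then 1 else 0))).
    + apply Rge_le, Hfosd. intros h1 h2 _ _ H.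
      destruct (Rle_dec t h1); destruct (Rle_dec t h2); lra.
    + intros h _. destruct (Rle_dec t h); ring.
    + intros h _. destruct (Rle_dec t h); ring.
Qed.

Lemma feasible_values_coupled Alh Arh hs pI pJ K Cs Cu Cmax a0l a0r a :
  (1 <= Alh)%nat -> (1 <= Arh)%nat -> is_pmf hs pI -> is_pmf hs pJ ->
  downward_kernel hs pI pJ K ->
  0 <= Cs -> (forall h, In h hs -> 0 <= Cu h) ->
  (forall h1 h2, In h1 hs -> In h2 hs -> h1 <= h2 -> Cu h2 <= Cu h1) ->
  feasible_values Alh Arh hs pJ Cs Cu Cmax a0l a0r a ->
  feasible_values Alh Arh hs pI Cs Cu Cmax a0l a0r a.
Proof.
  intros HAl HAr HpI HpJ HK HCs HCu HCu_anti [piJ (HpiJ & HU & [c [Hc HcC]] & Ha)].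
  pose proof (coupled_policy_valid Alh Arh hs pI pJ K piJ HK HpiJ) as HpiI.
  pose proof (action_marginal_coupled hs pI pJ K piJ HK) as Hmarg.
  exists (coupled_policy hs K piJ). split; [exact HpiI|]. split.
  { now apply coupled_unichain with pJ. }
  split.
  - destruct (is_limsup_le (cesaro (ECost Alh Arh hs pI (coupled_policy hs K piJ) a0l a0r Cs Cu))
                (cesaro (ECost Alh Arh hs pJ piJ a0l a0r Cs Cu)) c) as [c' [Hc' Hc'c]]; auto.
    + intros T. apply cesaro_nonneg. intros n. apply ECost_nonneg; auto. apply HpI.
    + intros T. apply cesaro_le. intros n. apply ECost_le_of_marginal; auto.
      * intros. apply (action_marginal_nonneg Alh Arh); auto. apply HpJ.
      * intros. now apply (stage_cost_coupled_le Alh Arh).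
    + exists c'. split; [exact Hc'|lra].
  - apply is_limsup_ext with (2 := Ha). intros T. unfold cesaro. f_equal.
    apply sumL_ext. intros n _. symmetry. apply EAr_eq_of_marginal; auto.
    now rewrite (proj2 HpI), (proj2 HpJ).
Qed.

Lemma is_glb_le_of_subset (E1 E2 : R -> Prop) m1 m2 :
  is_glb E1 m1 -> is_glb E2 m2 -> (forall x, E2 x -> E1 x) -> m1 <= m2.
Proof.
  intros [Hlb1 _] [_ Hgreatest2] Hsub. apply Hgreatest2. intros x Hx. auto.
Qed.

Theorem theorem2
  (Alh Arh : nat) (hs : list R) (pI pJ : R -> R)
  (Cs : R) (Cu : R -> R) (Cmax : R) (a0l a0r : nat)
  (HAl : (1 <= Alh)%nat) (HAr : (1 <= Arh)%nat)
  (Hnd : NoDup hs) (Hpos : forall h, In h hs -> 0 < h)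
  (HpI : is_pmf hs pI) (HpJ : is_pmf hs pJ)
  (HCs : 0 <= Cs) (HCu : forall h, In h hs -> 0 <= Cu h)
  (HCmax : 0 < Cmax)
  (Ha0l : (1 <= a0l <= Alh)%nat) (Ha0r : (1 <= a0r <= Arh)%nat)
  (HCu_noninc : forall h1 h2, In h1 hs -> In h2 hs -> h1 <= h2 -> Cu h2 <= Cu h1)
  (Hfosd : forall f : R -> R,
      (forall h1 h2, In h1 hs -> In h2 hs -> h1 <= h2 -> f h1 <= f h2) ->
      expect hs pI f >= expect hs pJ f)
  (vI vJ : R)
  (HvI : is_glb (feasible_values Alh Arh hs pI Cs Cu Cmax a0l a0r) vI)
  (HvJ : is_glb (feasible_values Alh Arh hs pJ Cs Cu Cmax a0l a0r) vJ) :
  vI <= vJ.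
Proof.
  destruct (downward_kernel_exists hs pI pJ Hnd (fosd_dominated hs pI pJ HpI HpJ Hfosd))
    as [K HK].
  apply (is_glb_le_of_subset _ _ _ _ HvI HvJ).
  intros a Ha. now apply (feasible_values_coupled Alh Arh hs pI pJ K).
Qed.
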